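(* Let $\lambda_0\in\mathbb{C}$ and let $L(\lambda)$ be a matrix pencil of the block upper triangular form \[ L(\lambda)=\begin{bmatrix} L_\ell(\lambda) & A(\lambda) & B(\lambda)\\ 0 & R(\lambda) & C(\lambda)\\ 0 & 0 & L_r(\lambda)\end{bmatrix}, \] where $L_\ell(\lambda)$ is right invertible over $\mathbb{C}[\lambda]$, $L_r(\lambda)$ has no eigenvalues at $\lambda_0$ and has no right minimal indices, and $R(\lambda)$ is regular and has only eigenvalues at $\lambda_0$. Then $\{v_i(\lambda)\}_{i=1}^s$ is a maximal set of root polynomials for $R(\lambda)$ at $\lambda_0$ of orders $\ell_1,\dots,\ell_s$ if and only if a maximal set of root polynomials (of the same orders) for $L(\lambda)$ at $\lambda_0$ has the form $\{q_i(\lambda)\}_{i=1}^s$ where \[ q_i(\lambda)=\begin{bmatrix} u_i(\lambda)\\ v_i(\lambda)\\ 0\end{bmatrix}+(\lambda-\lambda_0)^{\ell_i} r_i(\lambda),\qquad i=1,\dots,s, \] for some polynomial vectors $u_i(\lambda)$, $r_i(\lambda)$.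
   Context: A polynomial matrix $A(\lambda)$ is right invertible over $\mathbb{C}[\lambda]$ if there is a polynomial $A(\lambda)^R$ with $A(\lambda)A(\lambda)^R=I$. Let the columns of $N(\lambda)$ be a right minimal basis of $P(\lambda)$. A root polynomial of order $k$ at $\lambda_0$ is a polynomial $x(\lambda)$ with $x(\lambda_0)\neq0$, $P(\lambda)x(\lambda)=(\lambda-\lambda_0)^k v(\lambda)$, $v(\lambda_0)\ne0$, and $[N(\lambda_0)\ x(\lambda_0)]$ of full column rank. A set $\{r_1,\dots,r_s\}$ of root polynomials is $\lambda_0$-independent if $[N(\lambda_0)\ r_1(\lambda_0)\cdots r_s(\lambda_0)]$ has full column rank; it is complete if no larger $\lambda_0$-independent set exists; a complete set ordered by decreasing orders $k_1\ge\dots\ge k_s>0$ is maximal if for no $j$ there is a root polynomial $\tilde r$ of order $>k_j$ with $[N(\lambda_0)\ r_1(\lambda_0)\cdots r_{j-1}(\lambda_0)\ \tilde r(\lambda_0)]$ of full column rank. *)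

From HB Require Import structures.
From mathcomp Require Import all_boot all_order all_algebra.
From mathcomp Require Export fraction.
From mathcomp Require Export complex.
From mathcomp Require Export reals.

Set Implicit Arguments.
Unset Strict Implicit.
Unset Printing Implicit Defensive.

Import GRing.Theory.
Local Open Scope ring_scope.

Section PolyMatrixDefs.
Variable F : fieldType.

Definition evalmx (m n : nat) (M : 'M[{poly F}]_(m, n)) (mu : F) : 'M[F]_(m, n) :=
  map_mx (fun p => p.[mu]) M.

Definition fracmx (m n : nat) (M : 'M[{poly F}]_(m, n)) : 'M[{fraction {poly F}}]_(m, n) :=
  map_mx (@FracField.tofrac [the idomainType of {poly F}]) M.

Definition nrank (m n : nat) (M : 'M[{poly F}]_(m, n)) : nat := \rank (fracmx M).

(* matrix pencil: every entry has degree <= 1 *)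
Definition is_pencil (m n : nat) (M : 'M[{poly F}]_(m, n)) : Prop :=
  forall i j, (size (M i j) <= 2)%N.

Definition right_invertible (m n : nat) (M : 'M[{poly F}]_(m, n)) : Prop :=
  exists X : 'M[{poly F}]_(n, m), M *m X = 1%:M.

Definition pregular (n : nat) (M : 'M[{poly F}]_n) : Prop := \det M != 0.

Definition peigenvalue (m n : nat) (M : 'M[{poly F}]_(m, n)) (mu : F) : Prop :=
  (\rank (evalmx M mu) < nrank M)%N.

Definition coldeg (n p : nat) (N : 'M[{poly F}]_(n, p)) (j : 'I_p) : nat :=
  (\max_(i < n) size (N i j)).-1.

(* the columns of N are a polynomial basis of the right null space of P over F(lambda) *)
Definition poly_null_basis (m n p : nat) (P : 'M[{poly F}]_(m, n)) (N : 'M[{poly F}]_(n, p)) : Prop :=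
  [/\ P *m N = 0, nrank N = p & p = (n - nrank P)%N].

Definition right_minimal_basis (m n p : nat) (P : 'M[{poly F}]_(m, n)) (N : 'M[{poly F}]_(n, p)) : Prop :=
  poly_null_basis P N /\
  forall N' : 'M[{poly F}]_(n, p), poly_null_basis P N' ->
    (\sum_(j < p) coldeg N j <= \sum_(j < p) coldeg N' j)%N.

Definition root_poly (m n p : nat) (P : 'M[{poly F}]_(m, n)) (N : 'M[{poly F}]_(n, p))
    (mu : F) (x : 'cV[{poly F}]_n) (k : nat) : Prop :=
  [/\ (0 < k)%N,
      evalmx x mu != 0,
      (exists2 v : 'cV[{poly F}]_m, P *m x = ('X - mu%:P) ^+ k *: v & evalmx v mu != 0)
    & \rank (row_mx (evalmx N mu) (evalmx x mu)) = (p + 1)%N].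

Definition colsmx (n s : nat) (r : 'I_s -> 'cV[{poly F}]_n) : 'M[{poly F}]_(n, s) :=
  \matrix_(i < n, j < s) r j i ord0.

Definition indep_at (n p s : nat) (N : 'M[{poly F}]_(n, p)) (mu : F)
    (r : 'I_s -> 'cV[{poly F}]_n) : Prop :=
  \rank (row_mx (evalmx N mu) (evalmx (colsmx r) mu)) = (p + s)%N.

Definition root_set (m n p s : nat) (P : 'M[{poly F}]_(m, n)) (N : 'M[{poly F}]_(n, p))
    (mu : F) (r : 'I_s -> 'cV[{poly F}]_n) (k : 'I_s -> nat) : Prop :=
  (forall i, root_poly P N mu (r i) (k i)) /\ indep_at N mu r.

Definition complete_set (m n p s : nat) (P : 'M[{poly F}]_(m, n)) (N : 'M[{poly F}]_(n, p))
    (mu : F) (r : 'I_s -> 'cV[{poly F}]_n) (k : 'I_s -> nat) : Prop :=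
  root_set P N mu r k /\
  forall (t : nat) (r' : 'I_t -> 'cV[{poly F}]_n) (k' : 'I_t -> nat),
    root_set P N mu r' k' -> (t <= s)%N.

(* maximal: complete, orders non-increasing, and for no j (0-based) is there a root
   polynomial x of order > k_j with [N(mu) r_0(mu) ... r_{j-1}(mu) x(mu)] of full column rank *)
Definition maximal_set (m n p s : nat) (P : 'M[{poly F}]_(m, n)) (N : 'M[{poly F}]_(n, p))
    (mu : F) (r : 'I_s -> 'cV[{poly F}]_n) (k : 'I_s -> nat) : Prop :=
  [/\ complete_set P N mu r k,
      (forall i j : 'I_s, (i <= j)%N -> (k j <= k i)%N)
    & forall (j : 'I_s) (x : 'cV[{poly F}]_n) (kx : nat),
        root_poly P N mu x kx -> (k j < kx)%N ->
        \rank (row_mx (row_mx (evalmx N mu)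
                 (evalmx (colsmx (fun l : 'I_j => r (widen_ord (ltnW (ltn_ord j)) l))) mu))
                 (evalmx x mu)) <> (p + j + 1)%N].

End PolyMatrixDefs.

From HB Require Import structures.
From mathcomp Require Import all_boot all_order all_algebra.
From mathcomp Require Import fraction complex reals.
From Stdlib Require Import FunctionalExtensionality.

(* Since [Rm] is regular and [Lr(lam0)] has full column rank, every polynomial null
   vector of [L], in particular every column of its minimal basis [NL], vanishes below
   the first block row.  A minimal basis has full column rank at every point, and
   right invertibility of [Ll] forces the values at [lam0] of the top block of [NL] to
   span [ker Ll(lam0)].  Hence, for vectors annihilated by [L(lam0)], independence
   from [NL(lam0)] is independence of the middle blocks.  The middle block of a root
   polynomial of [L] of order [k] is a root polynomial of [Rm] of order at least [k]
   (the third block is divisible by [(X - lam0)^k]), and [v |-> (-X A v; v; 0)], with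
   [X] a right inverse of [Ll], sends root polynomials of [Rm] to root polynomials of
   [L] of the same order.  Completeness and maximality transfer along these two maps;
   the minimal basis of the regular [Rm] is empty. *)

Set Implicit Arguments.
Unset Strict Implicit.
Unset Printing Implicit Defensive.

Import GRing.Theory.
Local Open Scope ring_scope.

Section ColumnRank.
Variable K : fieldType.

Lemma row_full_mulmx_eq0 m n p (M : 'M[K]_(m, n)) (A : 'M_(n, p)) :
  row_full M -> M *m A = 0 -> A = 0.
Proof. by move=> fullM MA0; apply: (row_full_inj fullM); rewrite MA0 mulmx0. Qed.

Lemma row_full_kerP m n (M : 'M[K]_(m, n)) :
  row_full M <-> (forall c : 'cV_n, M *m c = 0 -> c = 0).
Proof.
split=> [fullM c | kerM]; first exact: row_full_mulmx_eq0.
have -> : row_full M = row_free M^T by rewrite /row_free /row_full mxrank_tr.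
rewrite -kermx_eq0; apply/eqP/row_matrixP => i; rewrite row0.
apply: trmx_inj; rewrite trmx0; apply: kerM.
by rewrite -{1}[M]trmxK -trmx_mul -row_mul mulmx_ker row0 trmx0.
Qed.

Lemma row_full_cV m (v : 'cV[K]_m) : row_full v = (v != 0).
Proof.
rewrite /row_full -mxrank_eq0; have := rank_leq_col v.
by case: (\rank v) => [|[|]].
Qed.

Lemma rank_row_mxA m n1 n2 n3 (A : 'M[K]_(m, n1)) (B : 'M_(m, n2)) (C : 'M_(m, n3)) :
  \rank (row_mx (row_mx A B) C) = \rank (row_mx A (row_mx B C)).
Proof.
rewrite -mxrank_tr -[in RHS]mxrank_tr !tr_row_mx -!addsmxE.
rewrite -(adds_eqmx (addsmxE _ _) (eqmx_refl _)).
by rewrite -(adds_eqmx (eqmx_refl _) (addsmxE _ _)) addsmxA.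
Qed.

Lemma row_full_colsub m s t (g : 'I_t -> 'I_s) (W : 'M[K]_(m, s)) :
  injective g -> row_full W -> row_full (colsub g W).
Proof.
move=> g_inj fullW; apply/row_full_kerP => c.
rewrite -[W]mulmx1 -mulmx_colsub -mulmxA => /((row_full_kerP W).1 fullW).
move/(congr1 (mulmx (rowsub g 1%:M))); rewrite mulmxA -mxsub_mul mulmx1 mulmx0.
have -> : mxsub g g (1%:M : 'M[K]_s) = 1%:M by apply/matrixP=> i j; rewrite !mxE (inj_eq g_inj).
by rewrite mul1mx.
Qed.

Lemma row_full_row_mx_cV m n (M : 'M[K]_(m, n)) (z : 'cV_m) :
  row_full M -> ~~ (z^T <= M^T)%MS -> row_full (row_mx M z).
Proof.
move=> fullM z_notin; apply/row_full_kerP => c; rewrite -[c]vsubmxK mul_row_col.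
set a := usubmx c; set b := dsubmx c => Mab0.
rewrite [b]mx11_scalar mul_mx_scalar in Mab0.
have Ma : M *m a = - (b 0 0 *: z) by apply/eqP; rewrite -addr_eq0 Mab0.
have b0 : b 0 0 = 0.
  apply: contraNeq z_notin => b_neq0; apply/submxP; exists (- (b 0 0)^-1 *: a)^T.
  by rewrite -trmx_mul -scalemxAr Ma scaleNr scalerN opprK scalerA mulVf // scale1r.
have a0 : a = 0 by apply: (row_full_inj fullM); rewrite Ma b0 scale0r oppr0 mulmx0.
have b_0 : b = 0 by rewrite [b]mx11_scalar b0 -scalemx1 scale0r.
by rewrite b_0 a0 col_mx0.
Qed.

Definition subst_col (R : Type) n p (N : 'M[R]_(n, p)) (j0 : 'I_p) (w : 'cV[R]_n) :=
  \matrix_(i, j) if j == j0 then w i 0 else N i j.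

Lemma subst_colE n p (N : 'M[K]_(n, p)) j0 w :
  subst_col N j0 w = N + (w - col j0 N) *m delta_mx 0 j0.
Proof.
apply/matrixP=> i j; rewrite !mxE big_ord1 !mxE eqxx /= eq_sym.
by case: eqP => [->|_]; rewrite ?mulr1 ?mulr0 ?addr0 // addrC subrK.
Qed.

Lemma row_full_subst_col n p (N : 'M[K]_(n, p)) j0 (y : 'cV_p) :
  row_full N -> y j0 0 != 0 -> row_full (subst_col N j0 (N *m y)).
Proof.
move=> fullN yj0; apply/row_full_kerP => x.
have -> : subst_col N j0 (N *m y) *m x =
    N *m (x + (y - delta_mx j0 0) *m (delta_mx 0 j0 *m x)).
  by rewrite subst_colE colE -mulmxBr [LHS]mulmxDl mulmxDr !mulmxA.
move/((row_full_kerP N).1 fullN) => x_eq.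
have dx0 : delta_mx 0 j0 *m x = 0 :> 'M_1.
  have := congr1 (mulmx (delta_mx 0 j0 : 'rV_p)) x_eq.
  rewrite mulmx0 mulmxDr mulmxA mulmxBr mul_delta_mx.
  rewrite -(rowE j0 y) [row j0 y]mx11_scalar [delta_mx 0 0]mx11_scalar !mxE eqxx /=.
  rewrite mulmxBl !mul_scalar_mx scale1r addrC subrK => /eqP.
  by rewrite scalemx_eq0 (negbTE yj0) => /eqP.
by rewrite dx0 mulmx0 addr0 in x_eq.
Qed.

End ColumnRank.

Section Evaluation.
Variables (F : fieldType) (mu : F).

Lemma evalmxM m n p (A : 'M[{poly F}]_(m, n)) (B : 'M_(n, p)) :
  evalmx (A *m B) mu = evalmx A mu *m evalmx B mu.
Proof. exact: (map_mxM (horner_eval mu)). Qed.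

Lemma evalmxD m n (A B : 'M[{poly F}]_(m, n)) :
  evalmx (A + B) mu = evalmx A mu + evalmx B mu.
Proof. exact: (map_mxD (horner_eval mu)). Qed.

Lemma evalmxN m n (A : 'M[{poly F}]_(m, n)) : evalmx (- A) mu = - evalmx A mu.
Proof. exact: (map_mxN (horner_eval mu)). Qed.

Lemma evalmxZ m n a (A : 'M[{poly F}]_(m, n)) :
  evalmx (a *: A) mu = a.[mu] *: evalmx A mu.
Proof. exact: (map_mxZ (horner_eval mu)). Qed.

Lemma evalmx0 m n : evalmx (0 : 'M[{poly F}]_(m, n)) mu = 0.
Proof. exact: (map_mx0 (horner_eval mu)). Qed.

Lemma evalmx_polyC m n (A : 'M[F]_(m, n)) : evalmx (map_mx polyC A) mu = A.
Proof. by apply/matrixP=> i j; rewrite !mxE hornerC. Qed.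

Lemma evalmx_row m n1 n2 (A : 'M[{poly F}]_(m, n1)) (B : 'M_(m, n2)) :
  evalmx (row_mx A B) mu = row_mx (evalmx A mu) (evalmx B mu).
Proof. exact: map_row_mx. Qed.

Lemma evalmx_col m1 m2 n (A : 'M[{poly F}]_(m1, n)) (B : 'M_(m2, n)) :
  evalmx (col_mx A B) mu = col_mx (evalmx A mu) (evalmx B mu).
Proof. exact: map_col_mx. Qed.

Lemma evalmx_block m1 m2 n1 n2 (Aul : 'M[{poly F}]_(m1, n1)) (Aur : 'M_(m1, n2))
    (Adl : 'M_(m2, n1)) (Adr : 'M_(m2, n2)) :
  evalmx (block_mx Aul Aur Adl Adr) mu =
  block_mx (evalmx Aul mu) (evalmx Aur mu) (evalmx Adl mu) (evalmx Adr mu).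
Proof. exact: map_block_mx. Qed.

Lemma evalmx_usub m1 m2 n (A : 'M[{poly F}]_(m1 + m2, n)) :
  evalmx (usubmx A) mu = usubmx (evalmx A mu).
Proof. exact: map_usubmx. Qed.

Lemma evalmx_dsub m1 m2 n (A : 'M[{poly F}]_(m1 + m2, n)) :
  evalmx (dsubmx A) mu = dsubmx (evalmx A mu).
Proof. exact: map_dsubmx. Qed.

End Evaluation.

Lemma scalemxI (R : idomainType) m n (a : R) (A B : 'M_(m, n)) :
  a != 0 -> a *: A = a *: B -> A = B.
Proof.
move=> a_neq0 /eqP; rewrite -subr_eq0 -scalerBr scalemx_eq0 (negbTE a_neq0) subr_eq0.
by move/eqP.
Qed.

Lemma det_neq0_mulmx_eq0 (R : idomainType) n p (M : 'M[R]_n) (A : 'M_(n, p)) :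
  \det M != 0 -> M *m A = 0 -> A = 0.
Proof.
move=> detM MA0; have /eqP : \det M *: A = 0.
  by rewrite -mul_scalar_mx -mul_adj_mx -mulmxA MA0 mulmx0.
by rewrite scalemx_eq0 (negbTE detM) => /eqP.
Qed.

Section DivisibilityByXsubC.
Variables (F : fieldType) (mu : F).
Local Notation pi := ('X - mu%:P).

Lemma hornerXsubCn_eq0 k : (0 < k)%N -> (pi ^+ k).[mu] = 0.
Proof. by case: k => // k _; rewrite horner_exp hornerXsubC subrr expr0n. Qed.

Lemma evalmx_eq0_factor m n (A : 'M[{poly F}]_(m, n)) :
  evalmx A mu = 0 -> exists B, A = pi *: B.
Proof.
move=> A_mu0; exists (map_mx (fun q => q %/ pi) A).
apply/matrixP=> i j; rewrite !mxE mulrC divpK // dvdp_XsubCl /root.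
by have := congr1 (fun M : 'M_(m, n) => M i j) A_mu0; rewrite !mxE => ->.
Qed.

Lemma dvdmx_XsubCn_full m n p (M : 'M[{poly F}]_(m, n)) (A : 'M_(n, p)) k B :
  row_full (evalmx M mu) -> M *m A = pi ^+ k *: B -> exists C, A = pi ^+ k *: C.
Proof.
move=> /row_fullP [Z ZM]; elim: k A B => [|k IHk] A B MA.
  by exists A; rewrite scale1r.
have [A1 A_eq] : exists A1, A = pi *: A1.
  apply: evalmx_eq0_factor; rewrite -[evalmx A mu]mul1mx -ZM -mulmxA -evalmxM MA.
  by rewrite evalmxZ hornerXsubCn_eq0 // scale0r mulmx0.
rewrite A_eq in MA *; have /IHk [C ->] : M *m A1 = pi ^+ k *: B.
  by apply: (scalemxI (negbT (polyXsubC_eq0 mu))); rewrite scalemxAr MA scalerA -exprS.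
by exists C; rewrite scalerA -exprS.
Qed.

Lemma dvdmx_XsubCn_eq0 m n (A : 'M[{poly F}]_(m, n)) :
  (forall k, exists B, A = pi ^+ k *: B) -> A = 0.
Proof.
move=> dvdA; apply/matrixP=> i j; rewrite mxE; apply: contraTeq isT => Aij_neq0.
set k := size (A i j); have [B AB] := dvdA k.
have : pi ^+ k %| A i j by rewrite AB mxE dvdp_mulIl.
by move/(dvdp_leq Aij_neq0); rewrite size_exp_XsubC ltnn.
Qed.

Lemma cV_XsubC_order m (w : 'cV[{poly F}]_m) :
  w != 0 -> exists e w', w = pi ^+ e *: w' /\ evalmx w' mu != 0.
Proof.
case/cV0Pn=> i wi_neq0; have [k] := ubnP (size (w i 0)).
elim: k w wi_neq0 => // k IHk w wi_neq0 size_wi.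
have [w_mu0 | ] := eqVneq (evalmx w mu) 0; last by exists 0%N, w; rewrite scale1r.
have [w1 w_eq] := evalmx_eq0_factor w_mu0.
have w1i_neq0 : w1 i 0 != 0.
  by apply: contraNneq wi_neq0; rewrite w_eq mxE => ->; rewrite mulr0.
have size_w1i : (size (w1 i ord0) < k)%N.
  by move: size_wi; rewrite w_eq mxE size_mul ?polyXsubC_eq0 // size_XsubC.
have [e [w' [w1_eq w'_mu]]] := IHk w1 w1i_neq0 size_w1i.
by exists e.+1, w'; rewrite w_eq w1_eq scalerA -exprS.
Qed.

End DivisibilityByXsubC.

Section NormalRank.
Variable F : fieldType.

Lemma fracmxM m n p (A : 'M[{poly F}]_(m, n)) (B : 'M_(n, p)) :
  fracmx (A *m B) = fracmx A *m fracmx B.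
Proof. exact: map_mxM. Qed.

Lemma row_full_fracmx mu m n (A : 'M[{poly F}]_(m, n)) :
  row_full (evalmx A mu) -> row_full (fracmx A).
Proof.
move=> /row_fullP [Z ZA]; set ZP := map_mx polyC Z.
have detZA : \det (ZP *m A) != 0.
  apply: contra_neq (@oner_neq0 F) => /(congr1 (horner_eval mu)).
  by rewrite rmorph0 -det_map_mx [map_mx _ _]evalmxM evalmx_polyC ZA det1.
have unitZA : fracmx (ZP *m A) \in unitmx.
  by rewrite unitmxE unitfE /fracmx det_map_mx tofrac_eq0.
rewrite /row_full eqn_leq rank_leq_col -{1}(mxrank_unit unitZA) fracmxM.
exact: mxrankM_maxr.
Qed.

Lemma rank_fracmx_null m n p (P : 'M[{poly F}]_(m, n)) (A : 'M_(n, p)) :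
  P *m A = 0 -> (\rank (fracmx A) <= n - nrank P)%N.
Proof.
move=> PA0; rewrite /nrank -mxrank_tr -(mxrank_tr (fracmx P)) -mxrank_ker.
apply: mxrankS; apply/sub_kermxP.
by rewrite -trmx_mul -fracmxM PA0 /fracmx map_mx0 trmx0.
Qed.

End NormalRank.

Lemma map_subst_col (aT rT : Type) (f : aT -> rT) n p (N : 'M_(n, p)) j0 w :
  map_mx f (subst_col N j0 w) = subst_col (map_mx f N) j0 (map_mx f w).
Proof. by apply/matrixP=> i j; rewrite !mxE; case: eqP. Qed.

Lemma mulmx_subst_col (R : pzRingType) m n p (P : 'M[R]_(m, n)) (N : 'M_(n, p)) j0 w :
  P *m subst_col N j0 w = subst_col (P *m N) j0 (P *m w).
Proof.
apply/matrixP=> i j; rewrite !mxE.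
case: eqP => [->|/eqP nj]; apply: eq_bigr => k _; rewrite !mxE ?eqxx //.
by rewrite (negbTE nj).
Qed.

Lemma coldeg_subst_col (F : fieldType) n p (N : 'M[{poly F}]_(n, p)) j0 w j :
  coldeg (subst_col N j0 w) j = if j == j0 then coldeg w 0 else coldeg N j.
Proof.
rewrite /coldeg; case: eqP => [->|/eqP nj]; congr _.-1; apply: eq_bigr => i _.
  by rewrite mxE eqxx.
by rewrite mxE (negbTE nj).
Qed.

Section ColumnReduction.
Variables (F : fieldType) (mu : F) (n p : nat).
Variables (N : 'M[{poly F}]_(n, p)) (c : 'cV[F]_p) (w : 'cV[{poly F}]_n).
Local Notation pi := ('X - mu%:P).
Hypothesis Nc_eq : N *m map_mx polyC c = pi *: w.

Lemma subst_col_null m (P : 'M[{poly F}]_(m, n)) j0 :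
  P *m N = 0 -> P *m subst_col N j0 w = 0.
Proof.
move=> PN0; have Pw0 : P *m w = 0.
  apply: (scalemxI (negbT (polyXsubC_eq0 mu))).
  by rewrite scalemxAr -Nc_eq mulmxA PN0 mul0mx scaler0.
by rewrite mulmx_subst_col PN0 Pw0; apply/matrixP=> i j; rewrite !mxE; case: eqP.
Qed.

Lemma nrank_subst_col j0 : nrank N = p -> c j0 0 != 0 -> nrank (subst_col N j0 w) = p.
Proof.
move=> rkN cj0; set t := FracField.tofrac pi.
have t_neq0 : t != 0 by rewrite tofrac_eq0 polyXsubC_eq0.
have w_eq : fracmx w = fracmx N *m (t^-1 *: fracmx (map_mx polyC c)).
  by rewrite -scalemxAr -fracmxM Nc_eq /fracmx map_mxZ scalerA (mulVf t_neq0) scale1r.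
apply/eqP; rewrite /nrank /fracmx map_subst_col -/(fracmx w) w_eq.
apply: row_full_subst_col; first by apply/eqP; exact: rkN.
rewrite !mxE; apply: mulf_neq0; first by rewrite invr_eq0; exact: t_neq0.
by rewrite tofrac_eq0 polyC_eq0; exact: cj0.
Qed.

Lemma coldeg_factor_lt j0 : w != 0 ->
  (forall j, c j 0 != 0 -> (\max_(i < n) size (N i j) <= \max_(i < n) size (N i j0))%N) ->
  (coldeg w ord0 < coldeg N j0)%N.
Proof.
move=> w_neq0 maxj0; rewrite /coldeg.
set D := (\max_(i < n) size (N i j0))%N; set Dw := (\max_(i < n) size (w i ord0))%N.
have size_Nc i : (size ((N *m map_mx polyC c) i ord0) <= D)%N.
  rewrite mxE; apply: leq_trans (size_sum _ _ _) _; apply/bigmax_leqP => j _.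
  rewrite mxE; have [->|cj] := eqVneq (c j 0) 0; first by rewrite mulr0 size_poly0.
  by rewrite mulrC size_Cmul //; apply: leq_trans _ (maxj0 j cj); exact: leq_bigmax.
have Dw_le : (Dw <= D.-1)%N.
  apply/bigmax_leqP => i _; have [->|wi] := eqVneq (w i 0) 0; first by rewrite size_poly0.
  move: (size_Nc i); rewrite Nc_eq mxE size_mul ?polyXsubC_eq0 // size_XsubC add2n /=.
  by move=> lt_wD; rewrite -ltnS (leq_trans lt_wD) // leqSpred.
have Dw_gt0 : (0 < Dw)%N.
  have /cV0Pn [i wi] := w_neq0.
  by apply: leq_trans _ (leq_bigmax i); rewrite size_poly_gt0.
by move: Dw_gt0 Dw_le; clearbody D Dw; case: Dw => // d; case: D.
Qed.

End ColumnReduction.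

(* Otherwise some [c != 0] has [N(mu) c = 0], so [N c = (X - mu) w]; replacing by [w]
   the column of largest degree among those involved in [c] gives a polynomial basis
   of the null space of smaller degree sum. *)
Lemma right_minimal_basis_full (F : fieldType) (mu : F) m n p
    (P : 'M[{poly F}]_(m, n)) (N : 'M_(n, p)) :
  right_minimal_basis P N -> row_full (evalmx N mu).
Proof.
case=> [[PN0 rkN p_eq] minN]; apply/row_full_kerP => c Nc0.
apply/eqP/negPn/negP => c_neq0.
have [w Nc_eq] : exists w, N *m map_mx polyC c = ('X - mu%:P) *: w.
  by apply: evalmx_eq0_factor; rewrite evalmxM evalmx_polyC.
have w_neq0 : w != 0.
  apply: contraNneq c_neq0 => w0; apply/eqP/matrixP=> i j.
  have : fracmx N *m fracmx (map_mx polyC c) = 0.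
    by rewrite -fracmxM Nc_eq w0 scaler0 /fracmx map_mx0.
  move/((row_full_kerP _).1 (introT eqP rkN))/matrixP/(_ i j).
  by rewrite !mxE => /eqP; rewrite tofrac_eq0 polyC_eq0 => /eqP.
pose D j := (\max_(i < n) size (N i j))%N.
have [j0 cj0 maxj0] : exists2 j0, c j0 0 != 0 & forall j, c j 0 != 0 -> (D j <= D j0)%N.
  have /cV0Pn [j cj] := c_neq0.
  by case: (@arg_maxnP _ j (fun k => c k 0 != 0) D cj) => j0; exists j0.
have null_subst : poly_null_basis P (subst_col N j0 w).
  by split; [exact: (subst_col_null Nc_eq j0 PN0) | exact: (nrank_subst_col Nc_eq rkN cj0) | ].
have := minN _ null_subst; rewrite leqNgt => /negP; apply.
rewrite (bigD1 j0) //= [X in (_ < X)%N](bigD1 j0) //= coldeg_subst_col eqxx.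
rewrite (eq_bigr (fun j => coldeg N j)) => [|j /negbTE nj]; last by rewrite coldeg_subst_col nj.
by rewrite ltn_add2r; apply: coldeg_factor_lt Nc_eq _ w_neq0 maxj0.
Qed.

Local Notation midsubmx Y := (usubmx (dsubmx Y)).
Local Notation prefix r j := (fun l : 'I_j => r (widen_ord (ltnW (ltn_ord j%N)) l)).

Lemma midsubmx_row (R : Type) m1 m2 m3 n n' (A : 'M[R]_(m1 + (m2 + m3), n)) (B : 'M_(_, n')) :
  midsubmx (row_mx A B) = row_mx (midsubmx A) (midsubmx B).
Proof. by apply/matrixP=> i j; rewrite !mxE; case: splitP => k _; rewrite !mxE. Qed.

Lemma vsubmx3K (R : Type) m1 m2 m3 n (Y : 'M[R]_(m1 + (m2 + m3), n)) :
  col_mx (usubmx Y) (col_mx (midsubmx Y) (dsubmx (dsubmx Y))) = Y.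
Proof. by rewrite !vsubmxK. Qed.

Lemma mulmx_block3 (R : pzRingType) m1 n1 n2 m3 n3 p (Ll : 'M[R]_(m1, n1))
    (A : 'M_(m1, n2)) (B : 'M_(m1, n3)) (Rm : 'M_n2) (Cm : 'M_(n2, n3)) (Lr : 'M_(m3, n3))
    (a : 'M_(n1, p)) (b : 'M_(n2, p)) (d : 'M_(n3, p)) :
  block_mx Ll (row_mx A B) 0 (block_mx Rm Cm 0 Lr) *m col_mx a (col_mx b d) =
  col_mx (Ll *m a + A *m b + B *m d) (col_mx (Rm *m b + Cm *m d) (Lr *m d)).
Proof.
by rewrite mul_block_col mul_row_col mul0mx add0r mul_block_col mul0mx add0r addrA.
Qed.

Lemma row_mx_colsmx_prefix (F : fieldType) n s (r : 'I_s -> 'cV[{poly F}]_n) (j : 'I_s)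
    (le_js : (j + 1 <= s)%N) :
  row_mx (colsmx (prefix r j)) (r j) =
  colsub (widen_ord le_js) (colsmx r).
Proof.
apply/matrixP=> a b; rewrite !mxE; case: splitP => k k_eq.
  by rewrite mxE; congr (r _ _ _); apply: val_inj; rewrite /= k_eq.
by rewrite (ord1 k); congr (r _ _ _); apply: val_inj; rewrite /= k_eq (ord1 k) addn0.
Qed.

Section IndependenceAt.
Variables (F : fieldType) (mu : F).

Definition indep_ext n p s (N : 'M[{poly F}]_(n, p)) (r : 'I_s -> 'cV[{poly F}]_n)
    (j : 'I_s) (x : 'cV[{poly F}]_n) : Prop :=
  \rank (row_mx (row_mx (evalmx N mu) (evalmx (colsmx (prefix r j)) mu)) (evalmx x mu)) =
  (p + j + 1)%N.

Lemma indep_atP n p s (N : 'M[{poly F}]_(n, p)) (r : 'I_s -> 'cV_n) :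
  reflect (indep_at N mu r) (row_full (row_mx (evalmx N mu) (evalmx (colsmx r) mu))).
Proof. exact: eqP. Qed.

Lemma indep_extP n p s (N : 'M[{poly F}]_(n, p)) (r : 'I_s -> 'cV_n) j x :
  reflect (indep_ext N r j x)
    (row_full (row_mx (evalmx N mu) (row_mx (evalmx (colsmx (prefix r j)) mu) (evalmx x mu)))).
Proof. by rewrite /row_full -rank_row_mxA addnA; exact: eqP. Qed.

Lemma root_poly_eval m n p (P : 'M[{poly F}]_(m, n)) (N : 'M_(n, p)) x k :
  root_poly P N mu x k -> evalmx P mu *m evalmx x mu = 0.
Proof.
by case=> k_gt0 _ [v Px _] _; rewrite -evalmxM Px evalmxZ hornerXsubCn_eq0 // scale0r.
Qed.

Lemma mulmx_colsmx_eq0 m n s (M : 'M[F]_(m, n)) (r : 'I_s -> 'cV_n) :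
  (forall i, M *m evalmx (r i) mu = 0) -> M *m evalmx (colsmx r) mu = 0.
Proof.
move=> Mr0; apply/matrixP=> a b.
transitivity ((M *m evalmx (r b) mu) a 0); last by rewrite Mr0 !mxE.
by rewrite !mxE; apply: eq_bigr => k _; rewrite !mxE.
Qed.

Lemma eq_evalmx_colsmx n s (r r' : 'I_s -> 'cV[{poly F}]_n) :
  (forall i, evalmx (r i) mu = evalmx (r' i) mu) ->
  evalmx (colsmx r) mu = evalmx (colsmx r') mu.
Proof. by move=> rr'; apply/matrixP=> a b; move/matrixP/(_ a 0): (rr' b); rewrite !mxE. Qed.

Lemma midsubmx_colsmx n1 n2 n3 s (r : 'I_s -> 'cV[{poly F}]_(n1 + (n2 + n3))) :
  midsubmx (evalmx (colsmx r) mu) = evalmx (colsmx (fun i => midsubmx (r i))) mu.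
Proof. by apply/matrixP=> a b; rewrite !mxE. Qed.

End IndependenceAt.

Section BlockTriangularPencil.
Variables (F : fieldType) (mu : F) (m1 n1 n2 m3 n3 pL : nat).
Variables (Ll : 'M[{poly F}]_(m1, n1)) (A : 'M[{poly F}]_(m1, n2)) (B : 'M[{poly F}]_(m1, n3)).
Variables (Rm : 'M[{poly F}]_n2) (Cm : 'M[{poly F}]_(n2, n3)) (Lr : 'M[{poly F}]_(m3, n3)).
Variables (NL : 'M[{poly F}]_(n1 + (n2 + n3), pL)) (NR : 'M[{poly F}]_(n2, 0)).
Variable X : 'M[{poly F}]_(n1, m1).

Local Notation L := (block_mx Ll (row_mx A B) 0 (block_mx Rm Cm 0 Lr)).
Local Notation pi := ('X - mu%:P).
Local Notation NLmu := (evalmx NL mu).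
Local Notation NL1mu := (evalmx (usubmx NL) mu).

Hypothesis LlX : Ll *m X = 1%:M.
Hypothesis Lr_full : row_full (evalmx Lr mu).
Hypothesis Rm_det : \det Rm != 0.
Hypothesis NL_basis : right_minimal_basis L NL.

Lemma dsubmx_NL_eq0 : dsubmx NL = 0.
Proof.
have [[LNL0 _ _] _] := NL_basis.
rewrite -(vsubmx3K NL) mulmx_block3 in LNL0.
move/eqP: LNL0; rewrite !col_mx_eq0 => /and3P [_ /eqP RCN0 /eqP LrN0].
have N3_0 : dsubmx (dsubmx NL) = 0.
  apply: (dvdmx_XsubCn_eq0 (mu := mu)) => k.
  by apply: (dvdmx_XsubCn_full Lr_full); rewrite LrN0 -(scaler0 _ (pi ^+ k)).
rewrite N3_0 mulmx0 addr0 in RCN0.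
by rewrite -[dsubmx NL]vsubmxK N3_0 (det_neq0_mulmx_eq0 Rm_det RCN0) col_mx0.
Qed.

Lemma evalmx_NL : NLmu = col_mx NL1mu 0.
Proof. by rewrite -[NL]vsubmxK dsubmx_NL_eq0 evalmx_col evalmx0 col_mxKu. Qed.

Lemma row_full_NL1mu : row_full NL1mu.
Proof.
apply/row_full_kerP => a NL1a0.
apply: (row_full_kerP _).1 (right_minimal_basis_full mu NL_basis) _ _.
by rewrite evalmx_NL mul_col_mx NL1a0 mul0mx col_mx0.
Qed.

(* Otherwise the right inverse [X] lifts a vector of [ker Ll(mu)] outside the span of
   [NL1mu] to a polynomial null vector of [L] which, together with [NL], has full column
   rank at [mu]: [pL + 1] independent null vectors, one more than the nullity of [L]. *)
Lemma ker_Ll_span (z : 'cV[F]_n1) : evalmx Ll mu *m z = 0 -> exists a, NL1mu *m a = z.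
Proof.
move=> Llz0; suff /submxP [a z_eq] : (z^T <= NL1mu^T)%MS.
  by exists a^T; rewrite -[z]trmxK z_eq trmx_mul trmxK.
apply/negPn/negP => z_notin.
have [w Llz] : exists w, Ll *m map_mx polyC z = pi *: w.
  by apply: evalmx_eq0_factor; rewrite evalmxM evalmx_polyC.
set y := map_mx polyC z - pi *: (X *m w).
have [[LNL0 _ pL_eq] _] := NL_basis.
have Y_null : L *m row_mx NL (col_mx y 0) = 0.
  rewrite mul_mx_row LNL0 -[0 : 'cV_(n2 + n3)]col_mx0 mulmx_block3 !mulmx0 !addr0.
  by rewrite /y mulmxBr -scalemxAr mulmxA LlX mul1mx Llz subrr !col_mx0 row_mx0.
have Y_full : row_full (evalmx (row_mx NL (col_mx y 0)) mu).
  have y_mu : evalmx y mu = z.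
    by rewrite evalmxD evalmxN evalmxZ hornerXsubC subrr scale0r oppr0 addr0 evalmx_polyC.
  rewrite evalmx_row evalmx_col evalmx0 y_mu evalmx_NL -block_mxEh block_mxEv.
  by rewrite row_mx0 /row_full rank_col_mx0; apply: row_full_row_mx_cV row_full_NL1mu z_notin.
by move: (rank_fracmx_null Y_null); rewrite -pL_eq (eqP (row_full_fracmx Y_full)) addn1 ltnn.
Qed.

Lemma evalmx_L : evalmx L mu = block_mx (evalmx Ll mu) (row_mx (evalmx A mu) (evalmx B mu)) 0
  (block_mx (evalmx Rm mu) (evalmx Cm mu) 0 (evalmx Lr mu)).
Proof. by rewrite !evalmx_block evalmx_row !evalmx0. Qed.

Lemma mul_row_NLmu_col c (Y : 'M[F]_(n1 + (n2 + n3), c)) (a : 'cV_pL) (b : 'cV_c) :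
  row_mx NLmu Y *m col_mx a b = col_mx (NL1mu *m a + usubmx Y *m b) (dsubmx Y *m b).
Proof.
by rewrite -{1}[Y]vsubmxK mul_row_col evalmx_NL !mul_col_mx mul0mx add_col_mx add0r.
Qed.

Lemma row_full_NL_mid c (Y : 'M[F]_(n1 + (n2 + n3), c)) :
  evalmx L mu *m Y = 0 -> row_full (row_mx NLmu Y) = row_full (midsubmx Y).
Proof.
move=> LY; rewrite evalmx_L -(vsubmx3K Y) mulmx_block3 in LY.
move/eqP: LY; rewrite !col_mx_eq0 => /and3P [/eqP LlY _ /eqP/(row_full_mulmx_eq0 Lr_full) Y3_0].
rewrite Y3_0 mulmx0 addr0 in LlY.
apply/idP/idP => fullY; apply/row_full_kerP => b Yb0.
  have [a NL1a] : exists a, NL1mu *m a = usubmx Y *m b.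
    apply: ker_Ll_span; rewrite mulmxA.
    have -> : evalmx Ll mu *m usubmx Y = - (evalmx A mu *m midsubmx Y).
      by apply/eqP; rewrite -addr_eq0 LlY.
    by rewrite mulNmx -mulmxA Yb0 mulmx0 oppr0.
  have := (row_full_kerP _).1 fullY (col_mx (- a) b).
  rewrite mul_row_NLmu_col mulmxN NL1a addNr -[dsubmx Y]vsubmxK mul_col_mx Yb0 Y3_0.
  rewrite mul0mx !col_mx0 => /(_ erefl) /eqP.
  by rewrite col_mx_eq0 => /andP [_ /eqP].
move: Yb0; rewrite -[b]vsubmxK mul_row_NLmu_col -[dsubmx Y]vsubmxK mul_col_mx Y3_0 mul0mx.
move=> /eqP; rewrite !col_mx_eq0 => /and3P [/eqP NL1Y1 /eqP Y2b _].
have b2_0 := (row_full_kerP _).1 fullY _ Y2b.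
rewrite b2_0 mulmx0 addr0 in NL1Y1.
by rewrite b2_0 ((row_full_kerP _).1 row_full_NL1mu _ NL1Y1) col_mx0.
Qed.

Definition lift_mid (b : 'cV[{poly F}]_n2) : 'cV[{poly F}]_(n1 + (n2 + n3)) :=
  col_mx (- (X *m (A *m b))) (col_mx b 0).

Lemma midsubmx_lift_mid b : midsubmx (lift_mid b) = b.
Proof. by rewrite col_mxKd col_mxKu. Qed.

Lemma evalmx_midsubmx_lift_mid b : evalmx (midsubmx (lift_mid b)) mu = evalmx b mu.
Proof. by rewrite midsubmx_lift_mid. Qed.

Lemma mulmx_lift_mid b : L *m lift_mid b = col_mx 0 (col_mx (Rm *m b) 0).
Proof. by rewrite mulmx_block3 !mulmx0 !addr0 mulmxN [Ll *m _]mulmxA LlX mul1mx addNr. Qed.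

Lemma evalmx_lift_mid_null b :
  evalmx Rm mu *m evalmx b mu = 0 -> evalmx L mu *m evalmx (lift_mid b) mu = 0.
Proof.
by move=> Rb0; rewrite -evalmxM mulmx_lift_mid !evalmx_col evalmxM Rb0 !evalmx0 !col_mx0.
Qed.

Lemma root_poly_Rm_factor b k z : (0 < k)%N -> evalmx b mu != 0 -> Rm *m b = pi ^+ k *: z ->
  exists e, root_poly Rm NR mu b (k + e).
Proof.
move=> k_gt0 b_neq0 Rb; have z_neq0 : z != 0.
  apply: contraNneq b_neq0 => z0; move: Rb; rewrite z0 scaler0.
  by move/(det_neq0_mulmx_eq0 Rm_det) ->; rewrite evalmx0.
have [e [z' [z_eq z'_neq0]]] := cV_XsubC_order mu z_neq0.
exists e; split; rewrite ?addn_gt0 ?k_gt0 //.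
  by exists z' => //; rewrite Rb z_eq scalerA -exprD.
by rewrite row_thin_mx; apply/eqP; move: b_neq0; rewrite -row_full_cV.
Qed.

Lemma Rm_midsubmx_dvd x k : root_poly L NL mu x k -> exists z, Rm *m midsubmx x = pi ^+ k *: z.
Proof.
case=> _ _ [w Lx _] _; rewrite -(vsubmx3K x) -(vsubmx3K w) mulmx_block3 !scale_col_mx in Lx.
case/eq_col_mx: Lx => _ /eq_col_mx [RCx Lrx].
have [y3 x3_eq] := dvdmx_XsubCn_full Lr_full Lrx.
exists (midsubmx w - Cm *m y3).
by rewrite scalerBr -RCx x3_eq -scalemxAr addrK.
Qed.

Lemma midsubmx_root_neq0 x k : root_poly L NL mu x k -> evalmx (midsubmx x) mu != 0.
Proof.
move=> x_root; rewrite evalmx_usub evalmx_dsub -row_full_cV -row_full_NL_mid.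
  by case: x_root => _ _ _ /eqP.
exact: root_poly_eval x_root.
Qed.

Lemma root_poly_midsubmx x k : root_poly L NL mu x k ->
  exists e, root_poly Rm NR mu (midsubmx x) (k + e).
Proof.
move=> x_root; have [z Rx] := Rm_midsubmx_dvd x_root.
have [k_gt0 _ _ _] := x_root.
exact: root_poly_Rm_factor k_gt0 (midsubmx_root_neq0 x_root) Rx.
Qed.

Lemma root_poly_lift_mid b k : root_poly Rm NR mu b k -> root_poly L NL mu (lift_mid b) k.
Proof.
move=> b_root; have Lb0 := evalmx_lift_mid_null (root_poly_eval b_root).
case: b_root => k_gt0 b_neq0 [v Rb v_neq0] _; split=> //.
- apply: contraNneq b_neq0 => lift0.
  by rewrite -(midsubmx_lift_mid b) evalmx_usub evalmx_dsub lift0 !linear0.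
- exists (col_mx 0 (col_mx v 0)); first by rewrite mulmx_lift_mid Rb !scale_col_mx !scaler0.
  by rewrite !evalmx_col !evalmx0 !col_mx_eq0 !eqxx /= andbT.
- apply/eqP; rewrite -[_ == _]/(row_full _) (row_full_NL_mid Lb0) -evalmx_dsub -evalmx_usub.
  by rewrite midsubmx_lift_mid row_full_cV.
Qed.

Section MiddleBlocks.
Variables (s : nat) (q : 'I_s -> 'cV[{poly F}]_(n1 + (n2 + n3))) (v : 'I_s -> 'cV[{poly F}]_n2).
Hypothesis q_null : forall i, evalmx L mu *m evalmx (q i) mu = 0.
Hypothesis q_mid : forall i, evalmx (midsubmx (q i)) mu = evalmx (v i) mu.

Lemma indep_at_mid : indep_at NL mu q <-> indep_at NR mu v.
Proof.
have eq_full : row_full (row_mx NLmu (evalmx (colsmx q) mu)) =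
               row_full (row_mx (evalmx NR mu) (evalmx (colsmx v) mu)).
  rewrite row_thin_mx row_full_NL_mid ?mulmx_colsmx_eq0 //.
  by rewrite midsubmx_colsmx (eq_evalmx_colsmx q_mid).
split=> /indep_atP full; apply/indep_atP; [rewrite -eq_full | rewrite eq_full]; exact: full.
Qed.

Lemma indep_ext_mid j x y :
  evalmx L mu *m evalmx x mu = 0 -> evalmx (midsubmx x) mu = evalmx y mu ->
  indep_ext mu NL q j x <-> indep_ext mu NR v j y.
Proof.
move=> x_null x_mid.
have eq_full :
    row_full (row_mx NLmu (row_mx (evalmx (colsmx (prefix q j)) mu) (evalmx x mu))) =
    row_full (row_mx (evalmx NR mu) (row_mx (evalmx (colsmx (prefix v j)) mu) (evalmx y mu))).
  rewrite row_thin_mx row_full_NL_mid; last first.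
    by rewrite mul_mx_row mulmx_colsmx_eq0 ?x_null ?row_mx0.
  rewrite midsubmx_row midsubmx_colsmx -evalmx_dsub -evalmx_usub x_mid.
  by rewrite (eq_evalmx_colsmx (fun l => q_mid _)).
split=> /indep_extP full; apply/indep_extP; [rewrite -eq_full | rewrite eq_full]; exact: full.
Qed.

End MiddleBlocks.

Lemma maximal_set_lift_mid s (v : 'I_s -> 'cV_n2) (l : 'I_s -> nat) :
  maximal_set Rm NR mu v l -> maximal_set L NL mu (fun i => lift_mid (v i)) l.
Proof.
case=> [[[v_root v_indep] v_compl] l_decr v_max].
have lift_null i : evalmx L mu *m evalmx (lift_mid (v i)) mu = 0.
  exact: evalmx_lift_mid_null (root_poly_eval (v_root i)).
have mid_lift i := evalmx_midsubmx_lift_mid (v i).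
split=> //; first split.
- split; first by move=> i; exact: root_poly_lift_mid (v_root i).
  exact/(indep_at_mid lift_null mid_lift).
- move=> t r k [r_root r_indep].
  have [e mid_root] := fin_all_exists (fun i => root_poly_midsubmx (r_root i)).
  apply: (v_compl t (fun i => midsubmx (r i)) (fun i => k i + e i)); split=> //.
  exact/(indep_at_mid (fun i => root_poly_eval (r_root i)) (fun i => erefl)).
- move=> j x kx x_root lt_lk.
  move/(indep_ext_mid lift_null mid_lift j (root_poly_eval x_root) erefl).
  have [e mid_root] := root_poly_midsubmx x_root.
  exact: v_max j _ _ mid_root (leq_trans lt_lk (leq_addr _ _)).
Qed.

Section MaximalSetMiddle.
Variables (s : nat) (u : 'I_s -> 'cV[{poly F}]_n1) (v : 'I_s -> 'cV[{poly F}]_n2).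
Variables (r : 'I_s -> 'cV[{poly F}]_(n1 + (n2 + n3))) (l : 'I_s -> nat).
Local Notation q := (fun i => col_mx (u i) (col_mx (v i) 0) + pi ^+ l i *: r i).
Hypothesis q_max : maximal_set L NL mu q l.

Lemma maximal_root i : root_poly L NL mu (q i) (l i).
Proof. by case: q_max => [[[q_root _] _] _ _]. Qed.

Lemma midsubmx_maximal i : midsubmx (q i) = v i + pi ^+ l i *: midsubmx (r i).
Proof. by rewrite /= -{1}[r i]vsubmx3K !scale_col_mx !add_col_mx col_mxKd col_mxKu. Qed.

Lemma evalmx_midsubmx_maximal i : evalmx (midsubmx (q i)) mu = evalmx (v i) mu.
Proof.
have [l_gt0 _ _ _] := maximal_root i.
by rewrite midsubmx_maximal evalmxD evalmxZ hornerXsubCn_eq0 // scale0r addr0.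
Qed.

Lemma Rm_maximal_dvd i : exists z, Rm *m v i = pi ^+ l i *: z.
Proof.
have [z Rq] := Rm_midsubmx_dvd (maximal_root i); exists (z - Rm *m midsubmx (r i)).
by rewrite scalerBr -Rq midsubmx_maximal mulmxDr -scalemxAr addrK.
Qed.

Lemma indep_ext_lift_mid_maximal j : indep_ext mu NL q j (lift_mid (v j)).
Proof.
have [[[_ q_indep] _] _ _] := q_max.
have q_null i := root_poly_eval (maximal_root i).
have lift_null : evalmx L mu *m evalmx (lift_mid (v j)) mu = 0.
  have [z Rz] := Rm_maximal_dvd j; have [l_gt0 _ _ _] := maximal_root j.
  by apply: evalmx_lift_mid_null; rewrite -evalmxM Rz evalmxZ hornerXsubCn_eq0 // scale0r.
apply/(indep_ext_mid q_null evalmx_midsubmx_maximal j lift_null (evalmx_midsubmx_lift_mid _)).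
have le_js : (j + 1 <= s)%N by rewrite addn1.
apply/indep_extP; rewrite row_thin_mx -evalmx_row (row_mx_colsmx_prefix _ le_js).
rewrite /evalmx map_mxsub; apply: row_full_colsub.
  by move=> a b /(congr1 val) /= /val_inj.
have /(indep_at_mid q_null evalmx_midsubmx_maximal)/indep_atP := q_indep.
by rewrite row_thin_mx.
Qed.

(* A larger order for [v i] would make [lift_mid (v i)] contradict the maximality of [q]. *)
Lemma root_poly_maximal i : root_poly Rm NR mu (v i) (l i).
Proof.
have [_ _ q_ext] := q_max.
have [z Rz] := Rm_maximal_dvd i; have [l_gt0 _ _ _] := maximal_root i.
have v_neq0 : evalmx (v i) mu != 0.
  by rewrite -evalmx_midsubmx_maximal; exact: midsubmx_root_neq0 (maximal_root i).
have [[|e] v_root] := root_poly_Rm_factor l_gt0 v_neq0 Rz; first by rewrite addn0 in v_root.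
have lt_le : (l i < l i + e.+1)%N by rewrite addnS ltnS leq_addr.
by case: (q_ext i _ _ (root_poly_lift_mid v_root) lt_le (indep_ext_lift_mid_maximal i)).
Qed.

Lemma maximal_set_mid : maximal_set Rm NR mu v l.
Proof.
have [[[q_root q_indep] q_compl] l_decr q_ext] := q_max.
have q_null i := root_poly_eval (q_root i).
have q_mid := evalmx_midsubmx_maximal.
split=> //; first split.
- split; first exact: root_poly_maximal.
  exact/(indep_at_mid q_null q_mid).
- move=> t r' k [r'_root r'_indep]; apply: (q_compl t (fun i => lift_mid (r' i)) k).
  split; first by move=> i; exact: root_poly_lift_mid (r'_root i).
  apply/(indep_at_mid _ (fun i => evalmx_midsubmx_lift_mid (r' i))) => // i.
  exact: evalmx_lift_mid_null (root_poly_eval (r'_root i)).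
- move=> j x kx x_root lt_lk.
  move/(indep_ext_mid q_null q_mid j (evalmx_lift_mid_null (root_poly_eval x_root))
          (evalmx_midsubmx_lift_mid x)).
  exact: q_ext j _ _ (root_poly_lift_mid x_root) lt_lk.
Qed.

End MaximalSetMiddle.

End BlockTriangularPencil.

Theorem theorem5p6 (R : realType) (lam0 : R[i]) (m1 n1 n2 m3 n3 : nat)
  (Ll : 'M[{poly R[i]}]_(m1, n1)) (A : 'M[{poly R[i]}]_(m1, n2))
  (B : 'M[{poly R[i]}]_(m1, n3)) (Rm : 'M[{poly R[i]}]_n2)
  (Cm : 'M[{poly R[i]}]_(n2, n3)) (Lr : 'M[{poly R[i]}]_(m3, n3))
  (pL : nat) (NL : 'M[{poly R[i]}]_(n1 + (n2 + n3), pL))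
  (pR : nat) (NR : 'M[{poly R[i]}]_(n2, pR)) :
  let L := block_mx Ll (row_mx A B) 0 (block_mx Rm Cm 0 Lr) in
  is_pencil L ->
  right_invertible Ll ->
  ~ peigenvalue Lr lam0 ->
  nrank Lr = n3 ->
  pregular Rm ->
  (forall mu, peigenvalue Rm mu -> mu = lam0) ->
  right_minimal_basis L NL ->
  right_minimal_basis Rm NR ->
  forall (s : nat) (v : 'I_s -> 'cV[{poly R[i]}]_n2) (l : 'I_s -> nat),
    maximal_set Rm NR lam0 v l <->
    exists (u : 'I_s -> 'cV[{poly R[i]}]_n1) (r : 'I_s -> 'cV[{poly R[i]}]_(n1 + (n2 + n3))),
      maximal_set L NL lam0
        (fun i => col_mx (u i) (col_mx (v i) 0) + ('X - lam0%:P) ^+ (l i) *: r i) l.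
Proof.
move=> L _ [X LlX] no_eig nrank_Lr Rm_reg _ NL_basis NR_basis s v l.
rewrite {}/L in NL_basis *.
have Lr_full : row_full (evalmx Lr lam0).
  rewrite /row_full eqn_leq rank_leq_col /= leqNgt; apply/negP => rank_lt.
  by apply: no_eig; rewrite /peigenvalue nrank_Lr.
have nrank_Rm : nrank Rm = n2.
  by rewrite /nrank mxrank_unit // unitmxE unitfE /fracmx det_map_mx tofrac_eq0.
have pR0 : pR = 0%N by have [[_ _ pR_eq] _] := NR_basis; rewrite pR_eq nrank_Rm subnn.
subst pR; split=> [v_max | [u [r q_max]]].
  exists (fun i => - (X *m (A *m v i))), (fun=> 0).
  have -> : (fun i => col_mx (- (X *m (A *m v i))) (col_mx (v i) 0) +
                     ('X - lam0%:P) ^+ l i *: 0) = (fun i => lift_mid n3 A X (v i)).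
    by apply: functional_extensionality => i; rewrite scaler0 addr0.
  exact: (maximal_set_lift_mid LlX Lr_full Rm_reg NL_basis v_max).
exact: (maximal_set_mid NR LlX Lr_full Rm_reg NL_basis q_max).
Qed.
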